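(* Let $(A,B)$ be a finite-dimensional even-symmetric associative superalgebra over an algebraically closed field $\mathbb{K}$ of characteristic zero which is $B$-irreducible and non-simple, different from the one-dimensional algebra with null product, and such that $A_{\bar 0}$ is a semi-simple $A_{\bar 0}$-bimodule. Then a subspace $I$ of $A$ is a minimal graded two-sided ideal of $A$ if and only if $I=\mathbb{K}x$ where $x$ is a non-zero homogeneous element of $\mathrm{Ann}(A)$.
   Context: A superalgebra is $\mathbb{Z}_2$-graded, $A=A_{\bar 0}\oplus A_{\bar 1}$, $A_\alpha A_\beta\subseteq A_{\alpha+\beta}$. An even-symmetric structure on $A$ is a bilinear form $B$ with $B(A_{\bar 0},A_{\bar 1})=B(A_{\bar 1},A_{\bar 0})=0$ which is supersymmetric ($B(x,y)=(-1)^{|x||y|}B(y,x)$), associative ($B(xy,z)=B(x,yz)$) and non-degenerate. $(A,B)$ is $B$-irreducible if its only graded two-sided ideals $I$ with $B|_{I\times I}$ non-degenerate are $\{0\}$ and $A$. A superalgebra is simple if its product is non-zero and it has no graded two-sided ideals other than $\{0\}$ and itself. A graded two-sided ideal $I$ is minimal if $I\notin\{\{0\},A\}$ and every graded two-sided ideal contained in $I$ is $\{0\}$ or $I$. $A_{\bar 0}$ is an $A_{\bar 0}$-bimodule via multiplication; it is semi-simple if every sub-bimodule has a complementary sub-bimodule. $\mathrm{Ann}(A)=\{x: xA=Ax=\{0\}\}$. *)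

From HB Require Import structures.
From mathcomp Require Import all_boot all_order all_algebra.
Set Implicit Arguments. Unset Strict Implicit. Unset Printing Implicit Defensive.
Import GRing.Theory.
Local Open Scope ring_scope.

Section Super.
Variables (K : fieldType) (V : vectType K).
Variable mul : V -> V -> V.
Variables A0 A1 : {vspace V}.

Definition bilinear_mul :=
  (forall a x y z, mul (a *: x + y) z = a *: mul x z + mul y z) /\
  (forall a x y z, mul z (a *: x + y) = a *: mul z x + mul z y).

Definition associative_mul := forall x y z, mul (mul x y) z = mul x (mul y z).

Definition is_grading :=
  (A0 + A1)%VS = fullv /\ directv (A0 + A1) /\
  (forall x y, x \in A0 -> y \in A0 -> mul x y \in A0) /\
  (forall x y, x \in A0 -> y \in A1 -> mul x y \in A1) /\
  (forall x y, x \in A1 -> y \in A0 -> mul x y \in A1) /\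
  (forall x y, x \in A1 -> y \in A1 -> mul x y \in A0).

Definition assoc_superalgebra := [/\ bilinear_mul, associative_mul & is_grading].

Definition homogeneous (x : V) := (x \in A0) || (x \in A1).

Definition even_symmetric_structure (B : V -> V -> K) :=
  (forall a x y z, B (a *: x + y) z = a * B x z + B y z) /\
  (forall a x y z, B z (a *: x + y) = a * B z x + B z y) /\
  (forall x y, x \in A0 -> y \in A1 -> B x y = 0 /\ B y x = 0) /\
  (* supersymmetric: B x y = (-1)^(|x||y|) B y x for homogeneous x, y *)
  (forall x y, x \in A0 -> homogeneous y -> B x y = B y x) /\
  (forall x y, x \in A1 -> y \in A1 -> B x y = - B y x) /\
  (forall x y z, B (mul x y) z = B x (mul y z)) /\
  (forall x, (forall y, B x y = 0) -> x = 0).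

Definition graded_subspace (I : {vspace V}) := ((I :&: A0) + (I :&: A1))%VS = I.

Definition two_sided_ideal (I : {vspace V}) :=
  forall x y, x \in I -> mul x y \in I /\ mul y x \in I.

Definition graded_ideal (I : {vspace V}) := graded_subspace I /\ two_sided_ideal I.

Definition B_irreducible (B : V -> V -> K) :=
  forall I : {vspace V}, graded_ideal I ->
    (forall x, x \in I -> (forall y, y \in I -> B x y = 0) -> x = 0) ->
    I = 0%VS \/ I = fullv.

Definition simple_superalgebra :=
  (exists x y, mul x y != 0) /\
  forall I : {vspace V}, graded_ideal I -> I = 0%VS \/ I = fullv.

Definition minimal_graded_ideal (I : {vspace V}) :=
  [/\ graded_ideal I, I <> 0%VS, I <> fullv &
      forall J : {vspace V}, graded_ideal J -> (J <= I)%VS ->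
        J = 0%VS \/ J = I].

Definition one_dim_null := \dim (fullv : {vspace V}) = 1%N /\ forall x y, mul x y = 0.

Definition sub_bimodule_A0 (W : {vspace V}) :=
  (W <= A0)%VS /\
  forall a w, a \in A0 -> w \in W -> mul a w \in W /\ mul w a \in W.

Definition A0_semisimple_bimodule :=
  forall W : {vspace V}, sub_bimodule_A0 W ->
    exists W' : {vspace V}, [/\ sub_bimodule_A0 W', (W + W')%VS = A0 &
                                (W :&: W')%VS = 0%VS].

Definition in_Ann (x : V) := forall y, mul x y = 0 /\ mul y x = 0.

End Super.

From HB Require Import structures.
From mathcomp Require Import all_boot all_order all_algebra.
From Stdlib Require Import Classical.

(* Let I be a minimal graded ideal.  Its radical {u in I | B(u, I) = 0} is a graded
   ideal contained in I; it is not 0 because A is B-irreducible and I is proper, so it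
   is I: I is totally isotropic, and then I I = 0 by associativity and non-degeneracy
   of B.  A complement of the sub-bimodule I :&: A0 of A0 shows that A0 annihilates
   I :&: A0 on both sides, and non-degeneracy then gives (A0 A0)(I :&: A1) = 0.
   A parity case analysis yields A (A (A I)) = 0, so the left annihilator of A in I,
   again a graded ideal inside I, cannot be 0: A I = 0, and I A = 0 follows from the
   supersymmetry of B.  Any nonzero homogeneous x in I thus spans a graded ideal,
   which is I by minimality.  Conversely K x is a one-dimensional graded ideal, proper
   since A is not the one-dimensional null algebra. *)

Set Implicit Arguments.
Unset Strict Implicit.
Unset Printing Implicit Defensive.
Import GRing.Theory.
Local Open Scope ring_scope.

Lemma addr_eq_self0 (M : zmodType) (m : M) : m = m + m -> m = 0.
Proof. by move=> E; apply: (@addrI _ m); rewrite addr0 -E. Qed.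

Section LinearPredicate.
Variables (K : fieldType) (V : vectType K).

Lemma vspace_of_linear_pred (P : V -> Prop) :
  P 0 -> (forall a x y, P x -> P y -> P (a *: x + y)) ->
  exists W : {vspace V}, forall x, x \in W <-> P x.
Proof.
move=> P0 Plin.
have extend (W : {vspace V}) : (forall x, x \in W -> P x) ->
    (forall x, x \in W <-> P x) \/
    exists2 W' : {vspace V}, (forall x, x \in W' -> P x) & (\dim W < \dim W')%N.
  move=> WP; case: (classic (exists2 x, P x & x \notin W)) => [[x Px xW]|noP].
    right; exists (W + <[x]>)%VS.
      by move=> _ /memv_addP [w /WP Pw [_ /vlineP [k ->] ->]]; rewrite addrC; apply: Plin.
    rewrite ltnNge; apply: contra xW => leWx.
    have /eqP -> : W == (W + <[x]>)%VS by rewrite eqEdim addvSl.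
    by rewrite memvE addvSr.
  left => x; split => [/WP // | Px]; apply: NNPP => xW.
  by apply: noP; exists x => //; apply/negP.
suff grow n (W : {vspace V}) : (\dim (fullv : {vspace V}) <= n + \dim W)%N ->
    (forall x, x \in W -> P x) -> exists W : {vspace V}, forall x, x \in W <-> P x.
  apply: (grow (\dim (fullv : {vspace V})) 0%VS); first by rewrite leq_addr.
  by move=> x; rewrite memv0 => /eqP ->.
elim: n W => [|n IHn] W dimW WP; case: (extend W WP) => [|[W' W'P ltW]]; try by exists W.
  by have := leq_trans ltW (leq_trans (dimvS (subvf W')) dimW); rewrite add0n ltnn.
by apply: (IHn W') => //; rewrite (leq_trans dimW) // addSnnS leq_add2l.
Qed.

End LinearPredicate.

Section Superalgebra.
Variables (K : fieldType) (V : vectType K) (mul : V -> V -> V) (A0 A1 : {vspace V}).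
Hypothesis superA : assoc_superalgebra mul A0 A1.

Let mul_bilinear : bilinear_mul mul := let: And3 h _ _ := superA in h.
Let mulA : associative_mul mul := let: And3 _ h _ := superA in h.
Let gradingA : is_grading mul A0 A1 := let: And3 _ _ h := superA in h.

Lemma mul0l z : mul 0 z = 0.
Proof.
by apply: addr_eq_self0; have := mul_bilinear.1 1 0 0 z; rewrite scaler0 addr0 scale1r.
Qed.

Lemma mul0r z : mul z 0 = 0.
Proof.
by apply: addr_eq_self0; have := mul_bilinear.2 1 0 0 z; rewrite scaler0 addr0 scale1r.
Qed.

Lemma mulDl x y z : mul (x + y) z = mul x z + mul y z.
Proof. by have := mul_bilinear.1 1 x y z; rewrite !scale1r. Qed.

Lemma mulDr x y z : mul z (x + y) = mul z x + mul z y.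
Proof. by have := mul_bilinear.2 1 x y z; rewrite !scale1r. Qed.

Lemma mulZl a x z : mul (a *: x) z = a *: mul x z.
Proof. by have := mul_bilinear.1 a x 0 z; rewrite !addr0 mul0l addr0. Qed.

Lemma mulZr a x z : mul z (a *: x) = a *: mul z x.
Proof. by have := mul_bilinear.2 a x 0 z; rewrite !addr0 mul0r addr0. Qed.

Lemma mul00 x y : x \in A0 -> y \in A0 -> mul x y \in A0. Proof. exact: gradingA.2.2.1. Qed.
Lemma mul01 x y : x \in A0 -> y \in A1 -> mul x y \in A1. Proof. exact: gradingA.2.2.2.1. Qed.
Lemma mul10 x y : x \in A1 -> y \in A0 -> mul x y \in A1. Proof. exact: gradingA.2.2.2.2.1. Qed.
Lemma mul11 x y : x \in A1 -> y \in A1 -> mul x y \in A0. Proof. exact: gradingA.2.2.2.2.2. Qed.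

Local Notation hom := (homogeneous A0 A1).

Lemma homogeneous_mul x y : hom x -> hom y -> hom (mul x y).
Proof.
case/orP=> hx /orP[] hy; apply/orP.
- by left; apply: mul00.
- by right; apply: mul01.
- by right; apply: mul10.
- by left; apply: mul11.
Qed.

Lemma grading_decomp x : exists x0 x1, [/\ x0 \in A0, x1 \in A1 & x = x0 + x1].
Proof.
have : x \in (A0 + A1)%VS by rewrite gradingA.1 memvf.
by case/memv_addP => x0 A0x0 [x1 A1x1 ->]; exists x0, x1.
Qed.

Lemma grading_sum_eq0 x0 x1 :
  x0 \in A0 -> x1 \in A1 -> x0 + x1 = 0 -> x0 = 0 /\ x1 = 0.
Proof.
move=> A0x0 A1x1 /eqP; rewrite addr_eq0 => /eqP x0E.
have : x0 \in (A0 :&: A1)%VS by rewrite memv_cap A0x0 x0E memvN.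
rewrite (directv_addP gradingA.2.1) memv0 => /eqP x00.
by split => //; apply/eqP; rewrite -oppr_eq0 -x0E x00.
Qed.

Lemma homogeneous_ind (Q : V -> Prop) :
  (forall x y, Q x -> Q y -> Q (x + y)) -> (forall x, hom x -> Q x) -> forall x, Q x.
Proof.
move=> QD Qh x; have [x0 [x1 [A0x0 A1x1 ->]]] := grading_decomp x.
by apply: QD; apply: Qh; rewrite /homogeneous ?A0x0 ?A1x1 ?orbT.
Qed.

Lemma graded_subspace_decomp (W : {vspace V}) x : graded_subspace A0 A1 W -> x \in W ->
  exists x0 x1, [/\ x0 \in W, x0 \in A0, x1 \in W, x1 \in A1 & x = x0 + x1].
Proof.
move=> gW; rewrite -{1}gW => /memv_addP [x0 + [x1 + ->]].
by rewrite !memv_cap => /andP[Wx0 A0x0] /andP[Wx1 A1x1]; exists x0, x1.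
Qed.

Lemma graded_subspaceP (W : {vspace V}) : (forall x, x \in W ->
  exists x0 x1, [/\ x0 \in W, x0 \in A0, x1 \in W, x1 \in A1 & x = x0 + x1]) ->
  graded_subspace A0 A1 W.
Proof.
move=> decW; apply/eqP; rewrite eqEsubv subv_add !capvSl /=.
apply/subvP => _ /decW [x0 [x1 [Wx0 A0x0 Wx1 A1x1 ->]]].
by rewrite memv_add // memv_cap ?Wx0 ?Wx1.
Qed.

Lemma graded_ind (W : {vspace V}) (Q : V -> Prop) : graded_subspace A0 A1 W ->
  (forall x y, Q x -> Q y -> Q (x + y)) ->
  (forall x, x \in W -> hom x -> Q x) -> forall x, x \in W -> Q x.
Proof.
move=> gW QD Qh _ /(graded_subspace_decomp gW) [x0 [x1 [Wx0 A0x0 Wx1 A1x1 ->]]].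
by apply: QD; apply: Qh; rewrite // /homogeneous ?A0x0 ?A1x1 ?orbT.
Qed.

Lemma graded_subspace_homogeneous_neq0 (W : {vspace V}) :
  graded_subspace A0 A1 W -> W <> 0%VS -> exists x : V, [/\ x \in W, hom x & x != 0].
Proof.
move=> gW W0; apply: NNPP => noHom; apply: W0; apply/vspaceP => x.
rewrite memv0; apply/idP/eqP => [|->]; last exact: mem0v.
apply: (graded_ind (Q := fun x => x = 0)) => // [_ _ -> ->|y Wy hy]; first by rewrite addr0.
by apply: NNPP => y0; apply: noHom; exists y; split => //; apply/eqP.
Qed.

Lemma vline_graded_ideal x : hom x -> in_Ann mul x -> graded_ideal mul A0 A1 <[x]>%VS.
Proof.
move=> hx annx; split.
  apply: graded_subspaceP => _ /vlineP [k ->].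
  case/orP: hx => hx; [exists (k *: x), 0 | exists 0, (k *: x)];
    by rewrite ?addr0 ?add0r ?mem0v ?memvZ ?memv_line.
move=> _ y /vlineP [k ->].
by rewrite mulZl mulZr (annx y).1 (annx y).2 scaler0 mem0v.
Qed.

Lemma vline_minimal_graded_ideal x : ~ one_dim_null mul ->
  x != 0 -> hom x -> in_Ann mul x -> minimal_graded_ideal mul A0 A1 <[x]>%VS.
Proof.
move=> not_null x0 hx annx; split.
- exact: vline_graded_ideal.
- by move=> lineE; move: (memv_line x); rewrite lineE memv0 (negPf x0).
- move=> lineE; apply: not_null; split; first by rewrite -lineE dim_vline x0.
  move=> u v; have /vlineP [k ->] : u \in <[x]>%VS by rewrite lineE memvf.
  by rewrite mulZl (annx v).1 scaler0.
- move=> J _ sJx; have [->|J0] := eqVneq J 0%VS; [by left | right].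
  by apply/eqP; rewrite eqEdim sJx dim_vline x0 lt0n dimv_eq0 J0.
Qed.

Lemma graded_ideal_left_annihilator (I : {vspace V}) : graded_ideal mul A0 A1 I ->
  exists2 L : {vspace V}, graded_ideal mul A0 A1 L &
    forall u, u \in L <-> u \in I /\ forall a, mul a u = 0.
Proof.
move=> [gI idI]; have [L memL] : exists L : {vspace V},
    forall u, u \in L <-> u \in I /\ forall a, mul a u = 0.
  apply: vspace_of_linear_pred => [|k u v [Iu annu] [Iv annv]].
    by split=> [|a]; rewrite ?mem0v ?mul0r.
  by split=> [|a]; rewrite ?memvD ?memvZ // mulDr mulZr annu annv scaler0 addr0.
exists L => //; split.
  apply: graded_subspaceP => u /memL [Iu annu].
  have [u0 [u1 [Iu0 A0u0 Iu1 A1u1 uE]]] := graded_subspace_decomp gI Iu.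
  have annu01 a : mul a u0 = 0 /\ mul a u1 = 0.
    move: a; apply: homogeneous_ind => [a b /= [au0 au1] [bu0 bu1]|a /orP[] ha].
    - by rewrite !mulDl au0 au1 bu0 bu1 !addr0.
    - by apply: grading_sum_eq0; rewrite ?mul00 ?mul01 // -mulDr -uE annu.
    - have [au1 au0] : mul a u1 = 0 /\ mul a u0 = 0.
        by apply: grading_sum_eq0; rewrite ?mul11 ?mul10 // addrC -mulDr -uE annu.
      by split.
  by exists u0, u1; split => //; apply/memL; split => // a; case: (annu01 a).
move=> u y /memL [Iu annu]; split; apply/memL; split.
- by case: (idI u y Iu).
- by move=> a; rewrite -mulA annu mul0l.
- by case: (idI u y Iu).
- by move=> a; rewrite -mulA annu.
Qed.

Section Form.
Variable B : V -> V -> K.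
Hypothesis formB : even_symmetric_structure mul A0 A1 B.

Let form_linear_l := formB.1.
Let form_linear_r := formB.2.1.
Let form_even_odd := formB.2.2.1.
Let form_sym_even := formB.2.2.2.1.
Let form_sym_odd := formB.2.2.2.2.1.
Let form_assoc := formB.2.2.2.2.2.1.
Let form_nondegenerate := formB.2.2.2.2.2.2.

Lemma form0l z : B 0 z = 0.
Proof.
by apply: addr_eq_self0; have := form_linear_l 1 0 0 z; rewrite scaler0 addr0 mul1r.
Qed.

Lemma form0r z : B z 0 = 0.
Proof.
by apply: addr_eq_self0; have := form_linear_r 1 0 0 z; rewrite scaler0 addr0 mul1r.
Qed.

Lemma formDl x y z : B (x + y) z = B x z + B y z.
Proof. by have := form_linear_l 1 x y z; rewrite scale1r mul1r. Qed.

Lemma formDr x y z : B z (x + y) = B z x + B z y.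
Proof. by have := form_linear_r 1 x y z; rewrite scale1r mul1r. Qed.

Lemma form01 x y : x \in A0 -> y \in A1 -> B x y = 0.
Proof. by move=> A0x A1y; case: (form_even_odd A0x A1y). Qed.

Lemma form10 x y : x \in A1 -> y \in A0 -> B x y = 0.
Proof. by move=> A1x A0y; case: (form_even_odd A0y A1x). Qed.

Lemma form_orthC x y : hom x -> hom y -> B x y = 0 -> B y x = 0.
Proof.
case/orP=> hx hy xy0; first by rewrite -form_sym_even.
case/orP: hy => hy; first by rewrite form_sym_even // /homogeneous hx orbT.
by rewrite form_sym_odd // xy0 oppr0.
Qed.

Lemma form_nondegenerate_hom x : (forall y, hom y -> B x y = 0) -> x = 0.
Proof.
move=> xh0; apply: form_nondegenerate; apply: homogeneous_ind => // y z xy0 xz0.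
by rewrite formDr xy0 xz0 addr0.
Qed.

Lemma graded_ideal_radical (I : {vspace V}) : graded_ideal mul A0 A1 I ->
  exists2 J : {vspace V}, graded_ideal mul A0 A1 J &
    forall u, u \in J <-> u \in I /\ forall y, y \in I -> B u y = 0.
Proof.
move=> [gI idI]; have [J memJ] : exists J : {vspace V},
    forall u, u \in J <-> u \in I /\ forall y, y \in I -> B u y = 0.
  apply: vspace_of_linear_pred => [|k u v [Iu orthu] [Iv orthv]].
    by split=> [|y _]; rewrite ?mem0v ?form0l.
  by split=> [|y Iy]; rewrite ?memvD ?memvZ // form_linear_l orthu // orthv // mulr0 addr0.
have idIl x y : x \in I -> mul x y \in I by move=> Ix; case: (idI x y Ix).
have idIr x y : x \in I -> mul y x \in I by move=> Ix; case: (idI x y Ix).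
have gJ : graded_subspace A0 A1 J.
  apply: graded_subspaceP => u /memJ [Iu orthu].
  have [u0 [u1 [Iu0 A0u0 Iu1 A1u1 uE]]] := graded_subspace_decomp gI Iu.
  have orthu01 y : y \in I -> hom y -> B u0 y = 0 /\ B u1 y = 0.
    move=> Iy /orP[] hy; have := orthu y Iy; rewrite uE formDl.
    - by rewrite (form10 A1u1 hy) addr0.
    - by rewrite (form01 A0u0 hy) add0r.
  have orth_I z : (forall y, y \in I -> hom y -> B z y = 0) -> forall y, y \in I -> B z y = 0.
    by move=> zh0; apply: graded_ind => // y y' zy0 zy'0; rewrite formDr zy0 zy'0 addr0.
  exists u0, u1; split => //; apply/memJ; split => //; apply: orth_I => y Iy hy.
    by case: (orthu01 y Iy hy).
  by case: (orthu01 y Iy hy).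
exists J => //; split => // x y /memJ [Ix orthx]; split; apply/memJ.
  by split=> [|z Iz]; rewrite ?idIl // form_assoc orthx ?idIr.
split=> [|z Iz]; first exact: idIr.
have Jx : x \in J by apply/memJ.
move: y z Iz; clear Ix orthx.
apply: homogeneous_ind => [y y' yx0 y'x0 z Iz|y hy].
  by rewrite mulDl formDl yx0 ?y'x0 ?addr0.
move: x Jx; apply: (graded_ind gJ) => [x x' yx0 yx'0 z Iz|x /memJ [Ix orthx] hx].
  by rewrite mulDr formDl yx0 ?yx'0 ?addr0.
apply: (graded_ind gI) => [z z' /= xz0 xz'0|z Iz hz]; first by rewrite formDr xz0 xz'0 addr0.
apply: form_orthC; [exact: hz | exact: homogeneous_mul |].
rewrite -form_assoc; apply: form_orthC; [exact: hx | exact: homogeneous_mul |].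
exact/orthx/idIl.
Qed.

Section MinimalIdeal.
Variable I : {vspace V}.
Hypothesis minI : minimal_graded_ideal mul A0 A1 I.
Hypothesis irrB : B_irreducible mul A0 A1 B.
Hypothesis ssA0 : A0_semisimple_bimodule mul A0.

Let gidI : graded_ideal mul A0 A1 I := let: And4 h _ _ _ := minI in h.
Let gI : graded_subspace A0 A1 I := gidI.1.
Let I_neq0 : I <> 0%VS := let: And4 _ h _ _ := minI in h.
Let I_neqT : I <> fullv := let: And4 _ _ h _ := minI in h.
Let I_minimal := let: And4 _ _ _ h := minI in h.

Lemma memI_mulr x y : x \in I -> mul x y \in I.
Proof. by move=> Ix; case: (gidI.2 x y Ix). Qed.

Lemma memI_mull x y : x \in I -> mul y x \in I.
Proof. by move=> Ix; case: (gidI.2 x y Ix). Qed.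

Lemma minimal_ideal_isotropic x y : x \in I -> y \in I -> B x y = 0.
Proof.
have [J gJ memJ] := graded_ideal_radical gidI.
have sJI : (J <= I)%VS by apply/subvP => u /memJ [].
have [J0|JI] := I_minimal gJ sJI; first last.
  by rewrite -{1}JI => /memJ [_ orthx] /orthx.
have radical0 u : u \in I -> (forall y, y \in I -> B u y = 0) -> u = 0.
  by move=> Iu orthu; apply/eqP; rewrite -memv0 -J0; apply/memJ.
by exfalso; case: (irrB gidI radical0); [exact: I_neq0 | exact: I_neqT].
Qed.

Lemma minimal_ideal_mul0 x y : x \in I -> y \in I -> mul x y = 0.
Proof.
move=> Ix Iy; apply: form_nondegenerate => z.
by rewrite form_assoc minimal_ideal_isotropic // memI_mulr.
Qed.

Lemma mul_A0_I0 u i : u \in A0 -> i \in I -> i \in A0 -> mul u i = 0 /\ mul i u = 0.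
Proof.
move=> A0u Ii A0i.
have subI0 : sub_bimodule_A0 mul A0 (I :&: A0)%VS.
  split=> [|a w A0a]; first exact: capvSr.
  by rewrite !memv_cap => /andP[Iw A0w]; rewrite memI_mull // memI_mulr ?mul00.
have [W [[sWA0 modW] I0W_A0 I0W_0]] := ssA0 subI0.
have : u \in (I :&: A0 + W)%VS by rewrite I0W_A0.
case/memv_addP => w + [w' Ww' uE]; rewrite memv_cap => /andP[Iw A0w].
have A0w' : w' \in A0 by apply: (subvP sWA0).
have I0W0 v : v \in I -> v \in A0 -> v \in W -> v = 0.
  by move=> Iv A0v Wv; apply/eqP; rewrite -memv0 -I0W_0 !memv_cap Iv A0v.
have [iw'W w'iW] := modW i w' A0i Ww'.
rewrite uE mulDl mulDr !(minimal_ideal_mul0 Iw Ii) !(minimal_ideal_mul0 Ii Iw) !add0r.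
by split; apply: I0W0; rewrite ?(memI_mull _ Ii) ?(memI_mulr _ Ii) ?mul00.
Qed.

Lemma mul_A0A0_I1 u v j : u \in A0 -> v \in A0 -> j \in I -> j \in A1 ->
  mul (mul u v) j = 0.
Proof.
move=> A0u A0v Ij A1j; apply: form_nondegenerate_hom => x /orP[] hx.
  exact: form10 (mul01 (mul00 A0u A0v) A1j) hx.
by rewrite !form_assoc (mul_A0_I0 A0v (memI_mulr _ Ij) (mul11 A1j hx)).1 form0r.
Qed.

Lemma mul3_minimal_ideal0_hom a b c x : hom a -> hom b -> hom c -> x \in I -> hom x ->
  mul a (mul b (mul c x)) = 0.
Proof.
move=> /orP[] ha /orP[] hb /orP[] hc Ix /orP[] hx.
- by rewrite (mul_A0_I0 hc Ix hx).1 !mul0r.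
- by rewrite -(mulA b c x) (mul_A0A0_I1 hb hc Ix hx) mul0r.
- by rewrite -(mulA a b) (mul_A0A0_I1 ha hb (memI_mull _ Ix) (mul10 hc hx)).
- by rewrite (mul_A0_I0 hb (memI_mull _ Ix) (mul11 hc hx)).1 mul0r.
- by rewrite (mul_A0_I0 hc Ix hx).1 !mul0r.
- by rewrite (mul_A0_I0 ha (memI_mull _ (memI_mull _ Ix)) (mul11 hb (mul01 hc hx))).1.
- by rewrite -(mulA b c x) (mul_A0_I0 (mul11 hb hc) Ix hx).1 mul0r.
- by rewrite -(mulA b c x) -(mulA a) (mul_A0A0_I1 ha (mul11 hb hc) Ix hx).
- by rewrite (mul_A0_I0 hc Ix hx).1 !mul0r.
- by rewrite -(mulA b c x) (mul_A0A0_I1 hb hc Ix hx) mul0r.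
- by rewrite -(mulA a b) -(mulA (mul a b)) (mul_A0_I0 (mul11 (mul10 ha hb) hc) Ix hx).1.
- by rewrite (mul_A0_I0 hb (memI_mull _ Ix) (mul11 hc hx)).1 mul0r.
- by rewrite (mul_A0_I0 hc Ix hx).1 !mul0r.
- by rewrite -(mulA a b) -(mulA (mul a b)) (mul_A0A0_I1 (mul11 ha hb) hc Ix hx).
- by rewrite -(mulA b c x) (mul_A0_I0 (mul11 hb hc) Ix hx).1 mul0r.
- by rewrite -(mulA a b) (mul_A0_I0 (mul11 ha hb) (memI_mull _ Ix) (mul11 hc hx)).1.
Qed.

Lemma mul3_minimal_ideal0 a b c x : x \in I -> mul a (mul b (mul c x)) = 0.
Proof.
move: a b c x; apply: homogeneous_ind => [a a' /= Ha Ha' b c x Ix|a ha].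
  by rewrite mulDl Ha ?Ha' ?addr0.
apply: homogeneous_ind => [b b' /= Hb Hb' c x Ix|b hb].
  by rewrite mulDl mulDr Hb ?Hb' ?addr0.
apply: homogeneous_ind => [c c' /= Hc Hc' x Ix|c hc].
  by rewrite mulDl !mulDr Hc ?Hc' ?addr0.
apply: (graded_ind gI) => [x x' /= Hx Hx'|x Ix hx]; first by rewrite !mulDr Hx Hx' addr0.
exact: mul3_minimal_ideal0_hom.
Qed.

Lemma minimal_ideal_annl a x : x \in I -> mul a x = 0.
Proof.
have [L gL memL] := graded_ideal_left_annihilator gidI.
have sLI : (L <= I)%VS by apply/subvP => u /memL [].
have [L0|LI] := I_minimal gL sLI; last by rewrite -LI => /memL [_ ->].
have annI0 w : w \in I -> (forall a, mul a w = 0) -> w = 0.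
  by move=> Iw annw; apply/eqP; rewrite -memv0 -L0; apply/memL.
exfalso; apply: I_neq0; apply/vspaceP => y; rewrite memv0.
apply/idP/eqP => [Iy|->]; last exact: mem0v.
have mul2_0 b c : mul b (mul c y) = 0.
  by apply: annI0 => [|a']; rewrite ?memI_mull ?mul3_minimal_ideal0.
have mul1_0 c : mul c y = 0 by apply: annI0 => [|b]; rewrite ?memI_mull ?mul2_0.
exact: annI0.
Qed.

Lemma minimal_ideal_annr x a : x \in I -> mul x a = 0.
Proof.
move=> Ix; move: a; apply: homogeneous_ind => [a a' /= Ha Ha'|a ha].
  by rewrite mulDr Ha Ha' addr0.
move: x Ix; apply: (graded_ind gI) => [x x' /= Hx Hx'|x Ix hx].
  by rewrite mulDl Hx Hx' addr0.
apply: form_nondegenerate_hom => y hy; apply: form_orthC; rewrite ?homogeneous_mul //.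
by rewrite -form_assoc minimal_ideal_annl // form0l.
Qed.

Lemma minimal_ideal_vline :
  exists x : V, [/\ x != 0, hom x, in_Ann mul x & I = <[x]>%VS].
Proof.
have [x [Ix hx x0]] := graded_subspace_homogeneous_neq0 gI I_neq0.
have annx : in_Ann mul x.
  by move=> y; rewrite (minimal_ideal_annl _ Ix) (minimal_ideal_annr _ Ix).
exists x; split => //.
have sxI : (<[x]> <= I)%VS by rewrite -memvE.
have [line0|->] := I_minimal (vline_graded_ideal hx annx) sxI; last by [].
by move: (memv_line x); rewrite line0 memv0 (negPf x0).
Qed.

End MinimalIdeal.
End Form.
End Superalgebra.

Theorem mainTheorem13 (K : closedFieldType) (V : vectType K)
  (mul : V -> V -> V) (A0 A1 : {vspace V}) (B : V -> V -> K) :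
  [pchar K] =i pred0 ->
  assoc_superalgebra mul A0 A1 ->
  even_symmetric_structure mul A0 A1 B ->
  B_irreducible mul A0 A1 B ->
  ~ simple_superalgebra mul A0 A1 ->
  ~ one_dim_null mul ->
  A0_semisimple_bimodule mul A0 ->
  forall I : {vspace V},
    minimal_graded_ideal mul A0 A1 I <->
    exists x : V, [/\ x != 0, homogeneous A0 A1 x, in_Ann mul x & I = <[x]>%VS].
Proof.
move=> _ superA formB irrB _ not_null ssA0 I; split => [minI|].
  exact: (minimal_ideal_vline superA formB minI irrB ssA0).
by case=> x [x0 hx annx ->]; apply: vline_minimal_graded_ideal.
Qed.
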